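(* In the setting described in the context, for every $t\ge0$: if $R_{t\infty}>0$ then $L_{t\infty}=\infty$, whereas if $L_{t\infty}<\infty$ then $R_{t\infty}=0$.
   Context: Let $(\Omega,\mathcal F,\mathbb P)$ be a probability space with a filtration $\{\mathcal F_t\}_{t\ge0}$ satisfying the usual conditions; (in)equalities between random variables hold a.s. A pricing kernel is an $\{\mathcal F_t\}$-adapted càdlàg semimartingale $\{\pi_t\}_{t\ge0}$ with (a) $\pi_t>0$, (b) $\mathbb E[\pi_t]<\infty$ for all $t\ge0$, (c) $\liminf_{t\to\infty}\mathbb E[\pi_t]=0$. Fix such a pricing kernel and set $P_{tT}=\pi_t^{-1}\mathbb E[\pi_T\mid\mathcal F_t]$ for $0\le t<T$. Define the exponential rate $R_{tT}=-(T-t)^{-1}\ln P_{tT}$ and the Libor rate $L_{tT}=(T-t)^{-1}(P_{tT}^{-1}-1)$. For a family $\{A_x\}_{x\in\mathbb R^+}$ of $\mathcal F_t$-measurable extended-real random variables, $\limsup_{x\to\infty}A_x:=\operatorname{ess\,inf}_{x}\operatorname{ess\,sup}_{y\ge x}A_y$, with essential supremum/infimum taken among $\mathcal F_t$-measurable random variables. The long exponential rate is $R_{t\infty}=\limsup_{T\to\infty}R_{tT}$ and the long Libor rate is $L_{t\infty}=\limsup_{T\to\infty}L_{tT}$. *)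

From HB Require Import structures.
From mathcomp Require Import all_boot all_order all_algebra.
From mathcomp Require Import all_classical all_reals all_analysis measurable_realfun.
Set Implicit Arguments. Unset Strict Implicit. Unset Printing Implicit Defensive.
Import Order.TTheory GRing.Theory Num.Theory.
Import numFieldNormedType.Exports.
Local Open Scope classical_set_scope.
Local Open Scope ring_scope.

Section Defs.
Context {R : realType} {d : measure_display} {T : measurableType d}.
Variable P : probability T R.

Definition Gmeasurable {d' : measure_display} {U : measurableType d'}
  (G : set (set T)) (X : T -> U) : Prop :=
  forall B : set U, measurable B -> G (X @^-1` B).

Definition filtration_usual (F : R -> set (set T)) : Prop :=
  [/\ (forall t, 0 <= t -> sigma_algebra setT (F t)),
      (forall t, 0 <= t -> F t `<=` measurable),
      (forall s t, 0 <= s -> s <= t -> F s `<=` F t),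
      (forall N, P.-negligible N -> F 0 N) &
      (forall t A, 0 <= t -> (forall s, t < s -> F s A) -> F t A)].

Definition adapted (F : R -> set (set T)) (X : R -> T -> R) : Prop :=
  forall t, 0 <= t -> Gmeasurable (F t) (X t).

Definition cadlag_path (f : R -> R) : Prop :=
  (forall s, 0 <= s -> f x @[x --> s^'+] --> f s) /\
  (forall s, 0 < s -> exists l : R, f x @[x --> s^'-] --> l).

Definition finite_variation_path (f : R -> R) : Prop :=
  forall u, 0 <= u -> exists C : R, forall (n : nat) (s : nat -> R),
    s 0%N = 0 -> s n = u -> (forall i, (i < n)%N -> s i <= s i.+1) ->
    \sum_(i < n) `|f (s i.+1) - f (s i)| <= C.

Definition is_cond_exp (G : set (set T)) (X Y : T -> R) : Prop :=
  [/\ Gmeasurable G Y, P.-integrable setT (EFin \o Y) &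
      forall A, G A -> (\int[P]_(x in A) (Y x)%:E = \int[P]_(x in A) (X x)%:E)%E].

Definition martingale (F : R -> set (set T)) (M : R -> T -> R) : Prop :=
  [/\ adapted F M,
      (forall t, 0 <= t -> P.-integrable setT (EFin \o M t)) &
      (forall s u A, 0 <= s -> s <= u -> F s A ->
         (\int[P]_(x in A) (M u x)%:E = \int[P]_(x in A) (M s x)%:E)%E)].

Definition stopping_time (F : R -> set (set T)) (tau : T -> \bar R) : Prop :=
  (forall w, (0 <= tau w)%E) /\
  (forall t, 0 <= t -> F t [set w | (tau w <= t%:E)%E]).

Definition stopped (M : R -> T -> R) (tau : T -> \bar R) : R -> T -> R :=
  fun t w => M (fine (Order.min t%:E (tau w))) w.

Definition local_martingale (F : R -> set (set T)) (M : R -> T -> R) : Prop :=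
  exists taus : nat -> T -> \bar R,
    [/\ (forall n, stopping_time F (taus n)),
        (forall n w, (taus n w <= taus n.+1 w)%E),
        {ae P, forall w, forall r : R, exists n, (r%:E < taus n w)%E} &
        (forall n, martingale F (stopped M (taus n)))].

Definition semimartingale (F : R -> set (set T)) (X : R -> T -> R) : Prop :=
  exists M A : R -> T -> R,
    [/\ adapted F M /\ adapted F A,
        (forall w, cadlag_path (M ^~ w) /\ cadlag_path (A ^~ w)),
        (forall w, finite_variation_path (A ^~ w) /\ M 0 w = 0 /\ A 0 w = 0),
        local_martingale F M &
        {ae P, forall w, forall t, 0 <= t -> X t w = X 0 w + M t w + A t w}].

Definition pricing_kernel (F : R -> set (set T)) (pi : R -> T -> R) : Prop :=
  [/\ adapted F pi /\ (forall w, cadlag_path (pi ^~ w)),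
      semimartingale F pi,
      (forall t, 0 <= t -> {ae P, forall w, 0 < pi t w}),
      (forall t, 0 <= t -> P.-integrable setT (EFin \o pi t)) &
      (* liminf_{t -> oo} E[pi_t] = 0 *)
      ereal_sup [set ereal_inf [set (\int[P]_x (pi t x)%:E)%E | t in [set t | M <= t]]
                | M in [set M : R | 0 <= M]] = 0%E].

Definition is_ess_sup (G : set (set T)) {I : Type} (J : set I)
  (A : I -> T -> \bar R) (Z : T -> \bar R) : Prop :=
  [/\ Gmeasurable G Z,
      (forall y, J y -> {ae P, forall w, (A y w <= Z w)%E}) &
      (forall Z', Gmeasurable G Z' ->
         (forall y, J y -> {ae P, forall w, (A y w <= Z' w)%E}) ->
         {ae P, forall w, (Z w <= Z' w)%E})].

Definition is_ess_inf (G : set (set T)) {I : Type} (J : set I)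
  (A : I -> T -> \bar R) (Z : T -> \bar R) : Prop :=
  [/\ Gmeasurable G Z,
      (forall y, J y -> {ae P, forall w, (Z w <= A y w)%E}) &
      (forall Z', Gmeasurable G Z' ->
         (forall y, J y -> {ae P, forall w, (Z' w <= A y w)%E}) ->
         {ae P, forall w, (Z' w <= Z w)%E})].

Definition is_ess_limsup (G : set (set T)) (D : set R)
  (A : R -> T -> \bar R) (Z : T -> \bar R) : Prop :=
  exists S : R -> T -> \bar R,
    (forall x, 0 <= x -> is_ess_sup G [set y | D y /\ x <= y] A (S x)) /\
    is_ess_inf G [set x | 0 <= x] S Z.

End Defs.

(** bond price P_{tT} = pi_t^{-1} E[pi_T | F_t], given a version E_tT of the
    conditional expectation *)
Definition bond {R : realType} {T : Type} (pi : R -> T -> R)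
  (E : R -> R -> T -> R) (t U : R) : T -> R :=
  fun w => (pi t w)^-1 * E t U w.

Definition exp_rate {R : realType} {T : Type} (pi : R -> T -> R)
  (E : R -> R -> T -> R) (t U : R) : T -> R :=
  fun w => - (U - t)^-1 * ln (bond pi E t U w).

Definition libor_rate {R : realType} {T : Type} (pi : R -> T -> R)
  (E : R -> R -> T -> R) (t U : R) : T -> R :=
  fun w => (U - t)^-1 * ((bond pi E t U w)^-1 - 1).

(* Write tau = T - t and b = P_{tT}, so that R_{tT} = - ln b / tau and
   L_{tT} = (1/b - 1) / tau.  If L_{tT} < N then 1/b < 1 + tau N, and
   1 + tau N <= (1 + tau a / 2)^2 <= exp (tau a) once tau a^2 >= 4 N, so
   R_{tT} <= a for all large T.  Hence, on the F_t-event where R_{t oo} > a,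
   the essential suprema of L_{tT} over T >= x are >= N for all x and N,
   i.e. L_{t oo} = oo.
   Conversely R_{t oo} >= 0: on the F_t-event A where ess sup_{T >= x} R_{tT}
   is negative, P_{tT} > 1, i.e. E[pi_T | F_t] > pi_t, so
   E[pi_T] >= E[pi_t 1_A] for all T >= x; as liminf E[pi_T] = 0 and pi_t > 0,
   A must be null. *)

From HB Require Import structures.
From mathcomp Require Import all_boot all_order all_algebra.
From mathcomp Require Import all_classical all_reals all_analysis measurable_realfun.
From mathcomp Require Import ring lra.
Import Order.TTheory GRing.Theory Num.Theory.
Import archimedean.Num.Theory archimedean.Num.Def.
Local Open Scope classical_set_scope.
Local Open Scope ring_scope.

Section rate_inequalities.
Context {R : realType}.

Lemma exp_rate_le_of_libor_rate_lt (tau a N b : R) : 0 < tau -> 0 < a ->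
  4 * N <= tau * a ^+ 2 -> tau^-1 * (b^-1 - 1) < N -> - tau^-1 * ln b <= a.
Proof.
move=> tau0 a0 tauN hb.
(* for b <= 0 the junk value ln b = 0 makes the rate 0 *)
have [b0|b0] := leP b 0; first by rewrite ln0 // mulr0 ltW.
have b_inv_lt : b^-1 < 1 + tau * N.
  by move: hb; rewrite -(ltr_pM2l tau0) mulrA mulfV ?gt_eqF // mul1r; lra.
have expR_ge : 1 + tau * N <= expR (tau * a).
  have -> : tau * a = tau * a / 2 + tau * a / 2 by field.
  have expR_half := expR_ge1Dx (tau * a / 2).
  have half_ge0 : 0 <= 1 + tau * a / 2 by have := mulr_gt0 tau0 a0; lra.
  rewrite expRD; apply: le_trans (ler_pM half_ge0 half_ge0 expR_half expR_half).
  have : tau * (4 * N) <= tau * (tau * a ^+ 2) by rewrite ler_pM2l.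
  have := mulr_gt0 tau0 a0; rewrite expr2; nra.
have : - ln b < tau * a.
  rewrite -lnV ?posrE // -[X in _ < X]expRK.
  by rewrite ltr_ln ?posrE ?invr_gt0 ?expR_gt0 //; exact: lt_le_trans expR_ge.
by rewrite mulNr -mulrN -(ler_pM2l tau0) mulrA mulfV ?gt_eqF // mul1r => /ltW.
Qed.

Lemma gt1_of_exp_rate_lt0 (tau b : R) : 0 < tau -> - tau^-1 * ln b < 0 -> 1 < b.
Proof.
move=> tau0; rewrite mulNr oppr_lt0 pmulr_rgt0 ?invr_gt0 // => lnb.
by rewrite ltNge; apply/negP => /ln_le0; rewrite leNgt lnb.
Qed.

End rate_inequalities.

Section Gmeasurable.
Context {R : realType} {d : measure_display} {T : measurableType d}.
Context {G : set (set T)}.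
Hypothesis sG : sigma_algebra setT G.

Lemma Gmeasurable_cst {d' : measure_display} {U : measurableType d'} (c : U) :
  Gmeasurable G (fun _ : T => c).
Proof.
move=> B _; have [G0 GC _] := sG; rewrite preimage_cst.
by case: ifP => _ //; rewrite -(setD0 setT); exact: GC.
Qed.

Lemma Gmeasurable_if {d' : measure_display} {U : measurableType d'}
    (q : T -> bool) (u v : U) :
  G [set w | q w] -> Gmeasurable G (fun w => if q w then u else v).
Proof.
move=> Gq B _; have [G0 GC _] := sG.
set f := fun w => if q w then u else v.
have [Bu|Bu] := pselect (B u); have [Bv|Bv] := pselect (B v).
- rewrite (_ : f @^-1` B = setT); first by rewrite -(setD0 setT); exact: GC.
  by apply/seteqP; split => w //= _; rewrite /f; case: ifP.
- rewrite (_ : f @^-1` B = [set w | q w]) //.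
  by apply/seteqP; split => w; rewrite /f /=; case: ifP.
- rewrite (_ : f @^-1` B = setT `\` [set w | q w]); first exact: GC.
  by apply/seteqP; split => w; rewrite /f /=; case: ifP => //= _ [].
- rewrite (_ : f @^-1` B = set0) //.
  by apply/seteqP; split => w //; rewrite /f /=; case: ifP.
Qed.

Lemma Gmeasurable_lt (Y : T -> \bar R) (r : \bar R) :
  Gmeasurable G Y -> G [set w | (Y w < r)%E].
Proof. by move=> /(_ _ (emeasurable_itv `]-oo, r[)). Qed.

Lemma Gmeasurable_gt (Y : T -> \bar R) (r : \bar R) :
  Gmeasurable G Y -> G [set w | (r < Y w)%E].
Proof.
move=> /(_ _ (emeasurable_itv `]r, +oo[)); congr G.
by apply/seteqP; split => w /=; rewrite in_itv /= andbT.
Qed.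

End Gmeasurable.

Lemma is_ess_sup_le_subset {R : realType} {d : measure_display}
    {T : measurableType d} {P : probability T R} {G : set (set T)} {I : Type}
    {J J' : set I} {A : I -> T -> \bar R} {S S' : T -> \bar R} :
  J `<=` J' -> is_ess_sup P G J A S -> is_ess_sup P G J' A S' ->
  {ae P, forall w, (S w <= S' w)%E}.
Proof.
by move=> JJ' [_ _ S_min] [mS' S'_ub _]; apply: S_min => // y /JJ'/S'_ub.
Qed.

Section ae_ge0_integral.
Local Open Scope ereal_scope.
Context {d : measure_display} {T : measurableType d} {R : realType}.
Variable mu : {measure set T -> \bar R}.

Lemma ae_ge0_integral_funepos (D : set T) (f : T -> \bar R) : measurable D ->
  measurable_fun D f -> {ae mu, forall w, D w -> 0 <= f w} ->
  \int[mu]_(w in D) f w = \int[mu]_(w in D) f^\+ w.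
Proof.
move=> mD mf f0; apply: ae_eq_integral => //; first exact: measurable_funepos.
by apply: filterS f0 => w f0 Dw; rewrite funeposE max_l // f0.
Qed.

Lemma ae_ge0_le_integral_ae (D : set T) (f g : T -> \bar R) : measurable D ->
  measurable_fun D f -> measurable_fun D g ->
  {ae mu, forall w, D w -> 0 <= f w} -> {ae mu, forall w, D w -> f w <= g w} ->
  \int[mu]_(w in D) f w <= \int[mu]_(w in D) g w.
Proof.
move=> mD mf mg f0 fg.
have g0 : {ae mu, forall w, D w -> 0 <= g w}.
  by apply: filterS2 f0 fg => w f0 fg Dw; rewrite (le_trans (f0 Dw) (fg Dw)).
rewrite (ae_ge0_integral_funepos _ _ mD mf f0).
rewrite (ae_ge0_integral_funepos _ _ mD mg g0).
apply: ae_ge0_le_integral => //; try exact: measurable_funepos.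
by apply: filterS fg => w fg Dw; rewrite !funeposE le_max2 // fg.
Qed.

Lemma ae_ge0_subset_integral (A B : set T) (f : T -> \bar R) :
  measurable A -> measurable B -> A `<=` B -> measurable_fun B f ->
  {ae mu, forall w, B w -> 0 <= f w} ->
  \int[mu]_(w in A) f w <= \int[mu]_(w in B) f w.
Proof.
move=> mA mB AB mf f0; have mfA := measurable_funS mB AB mf.
have f0A : {ae mu, forall w, A w -> 0 <= f w}.
  by apply: filterS f0 => w f0 /AB; exact: f0.
rewrite (ae_ge0_integral_funepos _ _ mA mfA f0A).
rewrite (ae_ge0_integral_funepos _ _ mB mf f0).
by apply: ge0_subset_integral => //; exact: measurable_funepos.
Qed.

Lemma ae_gt0_integral_gt0 (D : set T) (f : T -> \bar R) : measurable D ->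
  measurable_fun D f -> mu D != 0 -> {ae mu, forall w, D w -> 0 < f w} ->
  0 < \int[mu]_(w in D) f w.
Proof.
move=> mD mf muD0 f_gt0; rewrite ltNge; apply/negP => int_le0.
have int_abs : \int[mu]_(w in D) `|f w| = \int[mu]_(w in D) f w.
  apply: ae_eq_integral => //; first exact: measurableT_comp.
  by apply: filterS f_gt0 => w f_gt0 Dw; rewrite gee0_abs // ltW // f_gt0.
have /(ae_eq_integral_abs mu mD mf) f_eq0 : \int[mu]_(w in D) `|f w| = 0.
  by apply/eqP; rewrite eq_le integral_ge0 ?andbT ?int_abs // => w _.
have : {ae mu, forall w, ~ D w}.
  apply: filterS2 f_eq0 f_gt0 => w f_eq0 f_gt0 Dw.
  by move: (f_gt0 Dw); rewrite f_eq0 // ltxx.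
move=> D_null; move/negP: muD0; apply; apply/eqP/negligibleP => //.
by apply: negligibleS D_null => w Dw /(_ Dw).
Qed.

End ae_ge0_integral.

Lemma lb_le_ereal_liminf {R : realType} (f : R -> \bar R) (c : \bar R) (M : R) :
  0 <= M -> (forall s, M <= s -> (c <= f s)%E) ->
  (c <= ereal_sup [set ereal_inf [set f s | s in [set s | (M' <= s)%R]]
                  | M' in [set M' : R | (0 <= M')%R]])%E.
Proof.
move=> M0 cf.
apply: (@le_trans _ _ (ereal_inf [set f s | s in [set s | M <= s]])).
  by apply: le_ereal_inf_tmp => _ [s /= Ms <-]; exact: cf.
by apply: ereal_sup_ubound; exists M.
Qed.

Section long_rates.
Context {R : realType} {d : measure_display} {T : measurableType d}
  {P : probability T R} {G : set (set T)} (pi : R -> T -> R)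
  {E : R -> R -> T -> R} {t : R}.
Context {SR SL : R -> T -> \bar R} {Rinf Linf : T -> \bar R}.
Hypothesis sG : sigma_algebra setT G.
Hypothesis SR_ess_sup : forall x, 0 <= x -> is_ess_sup P G
  [set U | t < U /\ x <= U] (fun U w => (exp_rate pi E t U w)%:E) (SR x).
Hypothesis SL_ess_sup : forall x, 0 <= x -> is_ess_sup P G
  [set U | t < U /\ x <= U] (fun U w => (libor_rate pi E t U w)%:E) (SL x).
Hypothesis Rinf_ess_inf : is_ess_inf P G [set x | 0 <= x] SR Rinf.
Hypothesis Linf_ess_inf : is_ess_inf P G [set x | 0 <= x] SL Linf.

Lemma ess_sup_exp_rate_le (a N x : R) : 0 < a -> 0 <= x ->
  t + 4 * N / a ^+ 2 <= x ->
  {ae P, forall w, (SL x w < N%:E)%E -> (SR x w <= a%:E)%E}.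
Proof.
move=> a0 x0 tNx; have [mSL SL_ub _] := SL_ess_sup x x0.
have [_ _ SR_min] := SR_ess_sup x x0.
pose Z w := if (SL x w < N%:E)%E then a%:E else +oo%E.
have mZ : Gmeasurable G Z by apply: Gmeasurable_if => //; exact: Gmeasurable_lt.
have : {ae P, forall w, (SR x w <= Z w)%E}.
  apply: SR_min mZ _ => U [tU xU]; apply: filterS (SL_ub U (conj tU xU)) => w Lw.
  rewrite /Z; case: ifPn => [SLN|_]; last by rewrite leey.
  rewrite lee_fin; apply: (@exp_rate_le_of_libor_rate_lt _ _ _ N) => //.
  - by rewrite subr_gt0.
  - by rewrite -ler_pdivrMr ?exprn_gt0 // lerBrDl; exact: le_trans xU.
  - by rewrite -lte_fin; exact: le_lt_trans SLN.
by apply: filterS => w; rewrite /Z; case: ifP.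
Qed.

Lemma ess_limsup_libor_ge (a N : R) : 0 < a ->
  {ae P, forall w, (a%:E < Rinf w)%E -> (N%:E <= Linf w)%E}.
Proof.
move=> a0; have [mRinf Rinf_lb _] := Rinf_ess_inf.
have [_ _ Linf_max] := Linf_ess_inf.
pose Z w := if (a%:E < Rinf w)%E then N%:E else -oo%E.
have mZ : Gmeasurable G Z by apply: Gmeasurable_if => //; exact: Gmeasurable_gt.
have /(Linf_max Z mZ) : forall x, 0 <= x -> {ae P, forall w, (Z w <= SL x w)%E}.
  move=> x x0; set x' := Num.max x (t + 4 * N / a ^+ 2).
  have x'0 : 0 <= x' by rewrite le_max x0.
  have xx' : x <= x' by rewrite le_max lexx.
  have tx' : t + 4 * N / a ^+ 2 <= x' by rewrite le_max lexx orbT.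
  have SL_anti := is_ess_sup_le_subset
    (fun U '(conj tU x'U) => conj tU (le_trans xx' x'U))
    (SL_ess_sup x' x'0) (SL_ess_sup x x0).
  have SR_le := ess_sup_exp_rate_le a N x' a0 x'0 tx'.
  apply: filterS3 SR_le (Rinf_lb x' x'0) SL_anti => w SR_le Rinf_le SL_le.
  rewrite /Z; case: ifPn => [aR|_]; last by rewrite leNye.
  apply: le_trans SL_le; rewrite leNgt; apply/negP => /SR_le SRa.
  by move: (lt_le_trans aR (le_trans Rinf_le SRa)); rewrite ltxx.
by apply: filterS => w; rewrite /Z; case: ifP.
Qed.

Lemma ess_limsup_libor_eq_infty :
  {ae P, forall w, (0 < Rinf w)%E -> Linf w = +oo%E}.
Proof.
have : {ae P, forall w, forall m n : nat,
    ((m.+1%:R : R)^-1%:E < Rinf w)%E -> ((n%:R : R)%:E <= Linf w)%E}.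
  apply: ae_foralln => m; apply: ae_foralln => n.
  by apply: ess_limsup_libor_ge; rewrite invr_gt0.
apply: filterS => w Linf_ge Rinf_gt0.
have [m Rinf_gt] : exists m : nat, ((m.+1%:R : R)^-1%:E < Rinf w)%E.
  move: Rinf_gt0; case: (Rinf w) => [r||] //; last by exists 0%N; rewrite ltry.
  rewrite lte_fin => r0; exists (truncn r^-1).
  by rewrite lte_fin invf_plt ?posrE // truncnS_gt.
move: (Linf_ge m) => /(_ _ Rinf_gt); case: (Linf w) => [l||] // Linf_ge'.
- by have := Linf_ge' (truncn l).+1; rewrite lee_fin leNgt truncnS_gt.
- by have := Linf_ge' 0%N; rewrite leeNy_eq.
Qed.

Hypothesis G_measurable : G `<=` measurable.
Hypothesis t_ge0 : 0 <= t.
Hypothesis pi_gt0 : forall s, 0 <= s -> {ae P, forall w, 0 < pi s w}.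
Hypothesis pi_integrable : forall s, 0 <= s -> P.-integrable setT (EFin \o pi s).
Hypothesis pi_liminf_eq0 :
  ereal_sup [set ereal_inf [set (\int[P]_w (pi s w)%:E)%E | s in [set s | M <= s]]
            | M in [set M : R | 0 <= M]] = 0%E.
Hypothesis E_cond_exp : forall U, t < U -> is_cond_exp P G (pi U) (E t U).

Lemma integral_le_on_exp_rate_ess_sup_lt0 (x s : R) : 0 <= x -> t < s -> x <= s ->
  (\int[P]_(w in [set w | (SR x w < 0)%E]) (pi t w)%:E
     <= \int[P]_w (pi s w)%:E)%E.
Proof.
move=> x0 ts xs; set A := [set w | _].
have [mSR SR_ub _] := SR_ess_sup x x0.
have GA : G A by exact: Gmeasurable_lt.
have mA := G_measurable _ GA.
have s0 : 0 <= s := le_trans x0 xs.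
have [_ E_int E_cexp] := E_cond_exp s ts.
have mfunA (f : T -> R) :
    P.-integrable setT (EFin \o f) -> measurable_fun A (EFin \o f).
  by case/integrableP => mf _; exact: measurable_funS mf.
apply: (@le_trans _ _ (\int[P]_(w in A) (E t s w)%:E)%E).
  apply: ae_ge0_le_integral_ae => //; [exact: mfunA (pi_integrable t t_ge0)|
                                      exact: mfunA E_int| |].
    by apply: filterS (pi_gt0 t t_ge0) => w pi0 _; rewrite lee_fin ltW.
  apply: filterS2 (SR_ub s (conj ts xs)) (pi_gt0 t t_ge0) => w Rle pi0 Aw.
  have : 1 < bond pi E t s w.
    apply: (@gt1_of_exp_rate_lt0 _ (s - t)); first by rewrite subr_gt0.
    by rewrite -lte_fin; exact: le_lt_trans Rle Aw.
  rewrite /bond -(ltr_pM2l pi0) mulr1 mulrA mulfV ?gt_eqF // mul1r => ?.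
  by rewrite lee_fin ltW.
rewrite E_cexp //; apply: ae_ge0_subset_integral => //.
  by case/integrableP: (pi_integrable s s0).
by apply: filterS (pi_gt0 s s0) => w pi0 _; rewrite lee_fin ltW.
Qed.

Lemma ess_sup_exp_rate_ge0 (x : R) : 0 <= x -> {ae P, forall w, (0 <= SR x w)%E}.
Proof.
move=> x0; have [mSR _ _] := SR_ess_sup x x0.
set A := [set w | (SR x w < 0)%E].
have mA : measurable A by apply: G_measurable; exact: Gmeasurable_lt.
suff PA0 : P A = 0%E by exists A; split => // w /= /negP; rewrite -ltNge.
apply/eqP; apply: contraT => PA_neq0.
have int_gt0 : (0 < \int[P]_(w in A) (pi t w)%:E)%E.
  apply: ae_gt0_integral_gt0 => //.
    case/integrableP: (pi_integrable t t_ge0) => mf _.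
    exact: measurable_funS mf.
  by apply: filterS (pi_gt0 t t_ge0) => w pi0 _; rewrite lte_fin.
have : (\int[P]_(w in A) (pi t w)%:E <= 0)%E.
  rewrite -pi_liminf_eq0; apply: (@lb_le_ereal_liminf _ _ _ (Num.max x (t + 1))).
    by rewrite le_max x0.
  move=> s; rewrite ge_max => /andP[xs ts].
  apply: integral_le_on_exp_rate_ess_sup_lt0 => //.
  by apply: lt_le_trans ts; rewrite ltrDl.
by rewrite leNgt int_gt0.
Qed.

Lemma ess_limsup_exp_rate_ge0 : {ae P, forall w, (0 <= Rinf w)%E}.
Proof.
have [_ _ Rinf_max] := Rinf_ess_inf.
apply: (Rinf_max (fun _ => 0%E)); first exact: Gmeasurable_cst.
exact: ess_sup_exp_rate_ge0.
Qed.

End long_rates.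

Theorem proposition2 (R : realType) (d : measure_display) (T : measurableType d)
  (P : probability T R) (F : R -> set (set T)) (pi : R -> T -> R)
  (E : R -> R -> T -> R) (t : R) (Rinf Linf : T -> \bar R) :
  filtration_usual P F ->
  pricing_kernel P F pi ->
  (forall s U, 0 <= s -> s < U -> is_cond_exp P (F s) (pi U) (E s U)) ->
  0 <= t ->
  is_ess_limsup P (F t) [set U | t < U]
    (fun U w => (exp_rate pi E t U w)%:E) Rinf ->
  is_ess_limsup P (F t) [set U | t < U]
    (fun U w => (libor_rate pi E t U w)%:E) Linf ->
  (({ae P, forall w, (0 < Rinf w)%E}) -> {ae P, forall w, Linf w = +oo%E}) /\
  (({ae P, forall w, (Linf w < +oo)%E}) -> {ae P, forall w, Rinf w = 0%E}).
Proof.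
move=> [F_sigma F_meas _ _ _] [_ _ pi_gt0 pi_int pi_liminf] E_cexp t0
  [SR [SR_sup Rinf_inf]] [SL [SL_sup Linf_inf]].
have Linf_infty := ess_limsup_libor_eq_infty pi (F_sigma t t0) SR_sup SL_sup
  Rinf_inf Linf_inf.
have Rinf_ge0 := ess_limsup_exp_rate_ge0 pi (F_sigma t t0) SR_sup Rinf_inf
  (F_meas t t0) t0 pi_gt0 pi_int pi_liminf (fun U => E_cexp t U t0).
split => [Rinf_gt0 | Linf_fin].
  by apply: filterS2 Rinf_gt0 Linf_infty => w Rgt0; apply.
apply: filterS3 Linf_fin Linf_infty Rinf_ge0 => w Lfin Linfty R0.
apply/eqP; rewrite eq_le R0 andbT leNgt; apply/negP => /Linfty Linf_oo.
by move: Lfin; rewrite Linf_oo ltxx.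
Qed.
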